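(* Assume the standing hypotheses in the context. Let $x(t)$ be any solution of $x'=A(t)x+f(t,x)$. Then the system $$Z'(t)=A(t)Z(t)+f(t,x(t)+Z(t))-f(t,x(t))$$ has a unique solution bounded on $\mathbb{R}$, namely $Z\equiv0$.
   Context: Standing hypotheses: $A:\mathbb{R}\to\mathbb{R}^{n\times n}$ is continuous and bounded, $T(t,s)$ is the evolution operator of $x'=A(t)x$. $\mu:\mathbb{R}\to(0,\infty)$ is an increasing differentiable growth rate: $\mu(0)=1$, $\lim_{t\to-\infty}\mu(t)=0$, $\lim_{t\to+\infty}\mu(t)=+\infty$. The system $x'=A(t)x$ admits an algebraic dichotomy: projections $P(s)$, $Q(s)=I-P(s)$, constants $K,\alpha>0$ with $T(t,s)P(s)=P(t)T(t,s)$, $\|T(t,s)P(s)\|\le K(\mu(t)/\mu(s))^{-\alpha}$ ($t\ge s$), $\|T(t,s)Q(s)\|\le K(\mu(s)/\mu(t))^{-\alpha}$ ($t\le s$). $f:\mathbb{R}\times\mathbb{R}^n\to\mathbb{R}^n$ is continuous, $\|f(t,x)\|\le\beta\mu'(t)\mu^{-1}(t)$, $\|f(t,x_1)-f(t,x_2)\|\le\gamma\mu'(t)\mu^{-1}(t)\|x_1-x_2\|$ for constants $\beta,\gamma\ge0$, and $6K\gamma\alpha^{-1}<1$. *)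

From HB Require Import structures.
From mathcomp Require Import all_boot all_order all_algebra.
From mathcomp Require Import all_classical all_reals all_analysis.
Set Implicit Arguments. Unset Strict Implicit. Unset Printing Implicit Defensive.
Import Order.TTheory GRing.Theory Num.Theory.
Import numFieldNormedType.Exports.
Local Open Scope ring_scope.
Local Open Scope classical_set_scope.

Definition growth_rate (R : realType) (mu : R -> R) : Prop :=
  (forall t, 0 < mu t) /\
  (forall s t, s < t -> mu s < mu t) /\
  (forall t, derivable mu t 1) /\
  mu 0 = 1 /\
  (mu x @[x --> -oo] --> (0:R)) /\
  (mu x @[x --> +oo] --> +oo).

Definition evolution_operator (R : realType) (n : nat)
  (A : R -> 'M[R]_n) (T : R -> R -> 'M[R]_n) : Prop :=
  (forall s, T s s = 1%:M) /\
  (forall t s : R, is_derive t (1:R) (fun u => T u s) (A t *m T t s)).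

(* Algebraic (mu-)dichotomy with projections P, constants K, alpha.
   Operator-norm bounds ||M|| <= c are written as ||M v|| <= c ||v|| for all v. *)
Definition algebraic_dichotomy (R : realType) (n : nat)
  (T : R -> R -> 'M[R]_n) (mu : R -> R) (P : R -> 'M[R]_n) (K alpha : R) : Prop :=
  0 < K /\ 0 < alpha /\ (forall s, P s *m P s = P s) /\
  [/\
      (forall t s, T t s *m P s = P t *m T t s),
      (forall t s (v : 'cV[R]_n), s <= t ->
          `|T t s *m P s *m v| <= K * powR (mu t / mu s) (- alpha) * `|v|) &
      (forall t s (v : 'cV[R]_n), t <= s ->
          `|T t s *m (1%:M - P s) *m v| <= K * powR (mu s / mu t) (- alpha) * `|v|)].

Definition is_solution (R : realType) (n : nat)
  (F : R -> 'cV[R]_n -> 'cV[R]_n) (x : R -> 'cV[R]_n) : Prop :=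
  forall t : R, is_derive t (1:R) x (F t (x t)).

Definition bounded_on_R (R : realType) (n : nat) (x : R -> 'cV[R]_n) : Prop :=
  exists M : R, forall t, `|x t| <= M.

(* If sup |Z| <= B, split Z t = P t Z t + (1 - P t) Z t.  Along u |-> T t u Z u,
   whose derivative is T t u (f u (x u + Z u) - f u (x u)), the dichotomy and the
   Lipschitz bound give derivatives dominated by K gamma B (mu'/mu) (mu u / mu t)^(+-alpha),
   whose integrals over ]-oo, t] and [t, +oo[ are K gamma B / alpha.  A mean value
   inequality thus bounds each part by K gamma B / alpha, so sup |Z| <= theta B with
   theta = 2 K gamma / alpha < 1, forcing Z = 0.  Differentiating T t u in u needs the
   cocycle identity T t u T u s = T t s, which comes from uniqueness for linear
   equations (Gronwall's lemma). *)

From HB Require Import structures.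
From mathcomp Require Import all_boot all_order all_algebra.
From mathcomp Require Import all_classical all_reals all_analysis.
From mathcomp Require Import lra ring.
Import Order.TTheory GRing.Theory Num.Theory.
Import numFieldNormedType.Exports.
Local Open Scope ring_scope.
Local Open Scope classical_set_scope.

Section mx_norm.
Context {R : realFieldType}.

Lemma mx_norm_entry_le {m n} (M : 'M[R]_(m, n)) i j : `|M i j| <= `|M|.
Proof.
rewrite [leRHS]/Num.Def.normr /= mx_normrE.
exact: le_trans (le_bigmax _ _ (i, j)).
Qed.

Lemma mx_norm_le_entries {m n} (M : 'M[R]_(m, n)) c :
  0 <= c -> (forall i j, `|M i j| <= c) -> `|M| <= c.
Proof.
move=> c0 Mc; rewrite [leLHS]/Num.Def.normr /= mx_normrE.
by apply: bigmax_le => // -[i j] _; exact: Mc.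
Qed.

Lemma mx_norm_mulmx_le {m p q} (A : 'M[R]_(m, p)) (B : 'M[R]_(p, q)) :
  `|A *m B| <= p%:R * `|A| * `|B|.
Proof.
apply: mx_norm_le_entries => [|i j]; first by rewrite !mulr_ge0.
rewrite mxE; apply: le_trans (ler_norm_sum _ _ _) _.
have AB k : `|A i k * B k j| <= `|A| * `|B|.
  by rewrite normrM ler_pM ?mx_norm_entry_le.
apply: le_trans (ler_sum _ (fun k _ => AB k)) _.
by rewrite sumr_const card_ord -mulrA mulr_natl.
Qed.

Lemma mx_norm_scalar1_le {n} : `|(1%:M : 'M[R]_n)| <= 1.
Proof.
apply: mx_norm_le_entries => // i j; rewrite mxE.
by case: (i == j); rewrite ?normr1 ?normr0.
Qed.

Lemma mx_norm_left_inv_sub1_le {n} (X Y : 'M[R]_n) :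
  Y *m X = 1%:M -> n%:R * `|X - 1%:M| <= 1 / 2 ->
  `|Y - 1%:M| <= 2 * (n%:R * `|X - 1%:M|).
Proof.
move=> YX Xsmall.
have YE : Y - 1%:M = Y *m (1%:M - X) by rewrite mulmxBr mulmx1 YX.
have YXle : `|Y - 1%:M| <= `|Y| * (n%:R * `|X - 1%:M|).
  by rewrite YE (distrC X) mulrCA mulrA; exact: mx_norm_mulmx_le.
have Yle : `|Y| <= 1 + `|Y - 1%:M|.
  have := ler_normD (1%:M : 'M[R]_n) (Y - 1%:M).
  by rewrite addrC subrK => /le_trans; apply; rewrite lerD2r mx_norm_scalar1_le.
have : `|Y| <= 2.
  have := ler_wpM2l (normr_ge0 Y) Xsmall; lra.
move=> /(ler_wpM2r (mulr_ge0 (ler0n _ n) (normr_ge0 (X - 1%:M)))); lra.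
Qed.

End mx_norm.

Section mx_cvg.
Context {R : realFieldType} {T : Type} {F : set_system T} {FF : Filter F}.

Lemma cvg_norm_sub0 {V : normedModType R} (u : T -> V) (a : V) :
  u @ F --> a -> `|u x - a| @[x --> F] --> 0.
Proof. by move=> /subr_cvg0/cvg_norm; rewrite normr0. Qed.

Lemma cvg_mulmx {m p q} (X : T -> 'M[R]_(m, p)) (Y : T -> 'M[R]_(p, q))
  (A : 'M[R]_(m, p)) (B : 'M[R]_(p, q)) :
  X @ F --> A -> Y @ F --> B -> (fun x => X x *m Y x) @ F --> A *m B.
Proof.
move=> XA YB; apply/subr_cvg0/norm_cvg0P.
pose bound x := p%:R * (`|X x - A| * (`|B| + `|Y x - B|) + `|A| * `|Y x - B|).
apply: (@squeeze_cvgr _ _ _ _ (cst 0) bound); last 2 first.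
- exact: cvg_cst.
- suff : bound @ F --> p%:R * (0 * (`|B| + 0) + `|A| * 0).
    by rewrite !(mul0r, mulr0, addr0).
  apply: cvgM; first exact: cvg_cst.
  apply: cvgD; apply: cvgM; try exact: cvg_cst; try exact: cvg_norm_sub0.
  by apply: cvgD; [exact: cvg_cst | exact: cvg_norm_sub0].
near=> x; rewrite normr_ge0 /bound mulrDr.
have -> : X x *m Y x - A *m B = (X x - A) *m Y x + A *m (Y x - B).
  by rewrite mulmxBl mulmxBr addrA subrK.
apply: le_trans (ler_normD _ _) (lerD _ _); rewrite mulrA; last first.
  exact: mx_norm_mulmx_le.
apply: le_trans (mx_norm_mulmx_le _ _) _; apply: ler_wpM2l.
  by rewrite mulr_ge0 ?ler0n.
by have := ler_normD B (Y x - B); rewrite addrC subrK.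
Unshelve. all: by end_near.
Qed.

Lemma cvg_mx_left_inv1 {n} (X Y : T -> 'M[R]_n) :
  (forall x, Y x *m X x = 1%:M) ->
  X @ F --> (1%:M : 'M[R]_n) -> Y @ F --> (1%:M : 'M[R]_n).
Proof.
move=> YX X1; apply/subr_cvg0/norm_cvg0P.
have X10 : (fun x => n%:R * `|X x - 1%:M|) @ F --> 0.
  by rewrite -(mulr0 n%:R); apply: cvgM; [exact: cvg_cst | exact: cvg_norm_sub0].
apply: (squeeze_cvgr _ (cvg_cst 0)); last first.
  by rewrite -(mulr0 2); apply: cvgM; [exact: cvg_cst | exact: X10].
near=> x; rewrite normr_ge0 /=; apply: mx_norm_left_inv_sub1_le => //.
by near: x; apply: (cvgr_le _ X10); rewrite divr_gt0.
Unshelve. all: by end_near.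
Qed.

End mx_cvg.

Section derive_real_line.
Context {R : realFieldType}.

Lemma is_derive_quotientP {V : normedModType R} (f : R -> V) (a : R) (l : V) :
  is_derive a (1:R) f l <-> (fun h : R => h^-1 *: (f (h + a) - f a)) @ 0^' --> l.
Proof.
have E : (fun h : R => h^-1 *: ((f \o shift a) (h *: 1) - f a)) =
         (fun h : R => h^-1 *: (f (h + a) - f a)).
  by apply/funext => h /=; rewrite [h *: 1]mulr1.
split=> [[fa <-]|fl]; first by move: fa; rewrite /derivable /derive E.
by split; rewrite /derivable /derive E; [apply/cvg_ex; exists l | exact: cvg_lim].
Qed.

Lemma is_derive_cvg_shift {V : normedModType R} (f : R -> V) (a : R) (l : V) :
  is_derive a (1:R) f l -> (fun h : R => f (h + a)) @ 0^' --> f a.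
Proof.
move=> fa; apply/(continuous_withinNshiftx f a).2/differentiable_continuous.
by apply/derivable1_diffP; case: fa.
Qed.

Lemma is_derive_mx_entry {m n} {F : R -> 'M[R]_(m, n)} {a : R} {F'} i j :
  is_derive a (1:R) F F' -> is_derive a (1:R) (fun u => F u i j) (F' i j).
Proof.
move=> [Fa <-]; apply: DeriveDef; first exact: (derivable_mxP F a 1).1 Fa i j.
by rewrite derive_mx // mxE.
Qed.

Lemma is_derive_mulmx {m p q} {F : R -> 'M[R]_(m, p)} {G : R -> 'M[R]_(p, q)}
  {a : R} {F' G'} :
  is_derive a (1:R) F F' -> is_derive a (1:R) G G' ->
  is_derive a (1:R) (fun u => F u *m G u) (F' *m G a + F a *m G').
Proof.
move=> dF dG; apply/is_derive_quotientP.
have -> : (fun h : R => h^-1 *: (F (h + a) *m G (h + a) - F a *m G a)) =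
    (fun h => (h^-1 *: (F (h + a) - F a)) *m G (h + a) +
              F a *m (h^-1 *: (G (h + a) - G a))).
  apply/funext => h; rewrite -scalemxAl -scalemxAr -scalerDr.
  by rewrite mulmxBl mulmxBr addrA subrK.
apply: cvgD; apply: cvg_mulmx; try exact: cvg_cst.
- exact/is_derive_quotientP.
- exact: is_derive_cvg_shift dG.
- exact/is_derive_quotientP.
Qed.

Lemma is_derive_mulmxl {m p q} (C : 'M[R]_(m, p)) {G : R -> 'M[R]_(p, q)} {a G'} :
  is_derive a (1:R) G G' -> is_derive a (1:R) (fun u => C *m G u) (C *m G').
Proof.
by move=> dG; have := is_derive_mulmx (is_derive_cst C a 1) dG; rewrite mul0mx add0r.
Qed.

Lemma is_derive_mulmxr {m p q} {F : R -> 'M[R]_(m, p)} (C : 'M[R]_(p, q)) {a F'} :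
  is_derive a (1:R) F F' -> is_derive a (1:R) (fun u => F u *m C) (F' *m C).
Proof.
by move=> dF; have := is_derive_mulmx dF (is_derive_cst C a 1); rewrite mulmx0 addr0.
Qed.

End derive_real_line.

Section mean_value.
Context {R : realType}.

Lemma ler_is_derive_ge0 {f f' : R -> R} {a b : R} :
  (forall t, is_derive t (1:R) f (f' t)) -> (forall t, a <= t <= b -> 0 <= f' t) ->
  a <= b -> f a <= f b.
Proof.
move=> df f'ge0 ab; apply: (@ger0_derive1_ndecr R f a b) => //.
- move=> t; rewrite in_itv /= => /andP[ta tb].
  by rewrite derive1E derive_val f'ge0 // !ltW.
- by apply: derivable_within_continuous => t _; case: (df t).
Qed.

Lemma mean_value_mx_norm_le {m n} {F F' : R -> 'M[R]_(m, n)} {phi phi' : R -> R}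
  {a b : R} :
  (forall t, is_derive t (1:R) F (F' t)) -> (forall t, is_derive t (1:R) phi (phi' t)) ->
  (forall t, a <= t <= b -> `|F' t| <= phi' t) -> a <= b ->
  `|F b - F a| <= phi b - phi a.
Proof.
move=> dF dphi F'le ab.
have phi'ge0 t : a <= t <= b -> 0 <= phi' t.
  by move=> /F'le; apply: le_trans.
apply: mx_norm_le_entries => [|i j]; first by rewrite subr_ge0 (ler_is_derive_ge0 dphi).
have F'ij t : a <= t <= b -> `|F' t i j| <= phi' t.
  by move=> /F'le; apply: le_trans (mx_norm_entry_le _ _ _).
have up : phi a + F a i j <= phi b + F b i j.
  have d t : is_derive t (1:R) (fun u => phi u + F u i j) (phi' t + F' t i j).
    exact: is_deriveD (dphi t) (is_derive_mx_entry i j (dF t)).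
  apply: (ler_is_derive_ge0 d) => // t /F'ij.
  by have := ler_norm (- F' t i j); rewrite normrN; lra.
have down : phi a - F a i j <= phi b - F b i j.
  have d t : is_derive t (1:R) (fun u => phi u - F u i j) (phi' t - F' t i j).
    exact: is_deriveB (dphi t) (is_derive_mx_entry i j (dF t)).
  apply: (ler_is_derive_ge0 d) => // t /F'ij.
  by have := ler_norm (F' t i j); lra.
rewrite !mxE ler_norml; apply/andP; split; lra.
Qed.

Lemma is_derive_expR_scale (c : R) {h : R -> R} {h' u : R} :
  is_derive u (1:R) h h' ->
  is_derive u (1:R) (fun v => expR (c * v) * h v) (expR (c * u) * (c * h u + h')).
Proof.
move=> dh.
have dexp : is_derive u (1:R) (fun v => expR (c * v)) (expR (c * u) * c).
  apply: (is_derive1_comp (f := expR) (g := fun v => c * v)).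
  by have := is_deriveZ c (is_derive_id u (1:R)); rewrite /GRing.scale /= mulr1.
apply: is_derive_eq (is_deriveM dexp dh) _.
by rewrite /GRing.scale /=; ring.
Qed.

Lemma gronwall_le0 {h h' : R -> R} {L r : R} :
  (forall u, is_derive u (1:R) h (h' u)) -> (forall u, `|h' u| <= L * h u) ->
  h r = 0 -> forall t, h t <= 0.
Proof.
move=> dh h'le hr t.
have [rt|tr] := leP r t.
  have d u : is_derive u (1:R) (fun v => - (expR (- L * v) * h v))
                       (- (expR (- L * u) * (- L * h u + h' u))).
    exact/is_deriveN/is_derive_expR_scale.
  have : - (expR (- L * r) * h r) <= - (expR (- L * t) * h t).
    apply: (ler_is_derive_ge0 d) => // u _; rewrite oppr_ge0 pmulr_rle0 ?expR_gt0 //.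
    by have := h'le u; have := ler_norm (h' u); lra.
  by rewrite hr mulr0 oppr0 oppr_ge0 pmulr_rle0 // expR_gt0.
have : expR (L * t) * h t <= expR (L * r) * h r.
  apply: (ler_is_derive_ge0 (fun u => is_derive_expR_scale L (dh u))) => [u _|].
    rewrite pmulr_rge0 ?expR_gt0 //.
    by have := h'le u; have := ler_norm (- h' u); rewrite normrN; lra.
  exact: ltW.
by rewrite hr mulr0 pmulr_rle0 // expR_gt0.
Qed.

End mean_value.

Section linear_ode_uniqueness.
Context {R : realType}.

Lemma sqr_mx_norm_le_sum {m n} (D : 'M[R]_(m, n)) :
  `|D| ^+ 2 <= \sum_i \sum_j D i j ^+ 2.
Proof.
have row_ge0 i : 0 <= \sum_j D i j ^+ 2 by apply: sumr_ge0 => j _; exact: sqr_ge0.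
have [->|/mx_norm_neq0 [[i j] /= Dij]] := eqVneq `|D| 0.
  by rewrite expr0n /=; apply: sumr_ge0.
rewrite [`|D|]Dij real_normK ?num_real // (bigD1 i) //= (bigD1 j) //= -addrA lerDl.
by apply: addr_ge0; apply: sumr_ge0 => *; rewrite ?sqr_ge0.
Qed.

Lemma is_derive_sum_sqr_entries {m n} {D : R -> 'M[R]_(m, n)} {D' t} :
  is_derive t (1:R) D D' ->
  is_derive t (1:R) (fun u => \sum_i \sum_j D u i j ^+ 2)
    (\sum_i \sum_j (D t i j *: D' i j + D t i j *: D' i j)).
Proof.
move=> dD.
have -> : (fun u => \sum_i \sum_j D u i j ^+ 2) =
          \sum_i \sum_j (fun u => D u i j ^+ 2).
  by apply/funext => u; rewrite fct_sumE; apply: eq_bigr => i _; rewrite fct_sumE.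
apply: is_derive_sum => i; apply: is_derive_sum => j.
exact: is_deriveM (is_derive_mx_entry i j dD) (is_derive_mx_entry i j dD).
Qed.

Lemma sum_sqr_entries_linear_derive_le {n k} (D : 'M[R]_(n, k)) {A : 'M[R]_n} {M : R} :
  `|A| <= M ->
  `|\sum_i \sum_j (D i j *: (A *m D) i j + D i j *: (A *m D) i j)| <=
    (n * k)%:R * (2 * (n%:R * M)) * \sum_i \sum_j D i j ^+ 2.
Proof.
move=> AM; have M0 : 0 <= M := le_trans (normr_ge0 _) AM.
set c := n%:R * M * `|D| ^+ 2.
have term i j : `|D i j *: (A *m D) i j + D i j *: (A *m D) i j| <= 2 * c.
  have ADle : `|(A *m D) i j| <= n%:R * M * `|D|.
    apply: le_trans (mx_norm_entry_le _ _ _) (le_trans (mx_norm_mulmx_le _ _) _).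
    by rewrite ler_wpM2r // ler_wpM2l.
  have : `|D i j *: (A *m D) i j| <= c.
    rewrite normrZ /c expr2 mulrCA.
    exact: ler_pM (normr_ge0 _) (normr_ge0 _) (mx_norm_entry_le D i j) ADle.
  move=> xle; apply: le_trans (ler_normD _ _) _.
  by rewrite mulr_natl mulr2n lerD.
apply: le_trans (ler_norm_sum _ _ _) _.
apply: le_trans (ler_sum _ (fun i _ => ler_norm_sum _ _ _)) _.
apply: le_trans (ler_sum _ (fun i _ => ler_sum _ (fun j _ => term i j))) _.
rewrite !sumr_const !card_ord -mulrnA -[X in X <= _]mulr_natl.
have -> : (k * n)%:R * (2 * c) = (n * k)%:R * (2 * (n%:R * M)) * `|D| ^+ 2.
  by rewrite /c mulnC natrM; ring.
by rewrite ler_wpM2l ?sqr_mx_norm_le_sum // !mulr_ge0 ?ler0n.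
Qed.

(* Gronwall on the sum of squared entries, which, unlike the norm, is differentiable. *)
Lemma linear_ode_eq0 {n k} {A : R -> 'M[R]_n} {M : R} {D : R -> 'M[R]_(n, k)} {r : R} :
  (forall t, `|A t| <= M) -> (forall t, is_derive t (1:R) D (A t *m D t)) ->
  D r = 0 -> forall t, D t = 0.
Proof.
move=> Ale dD Dr t.
pose h u := \sum_i \sum_j D u i j ^+ 2.
have dh u := is_derive_sum_sqr_entries (dD u).
have h'le u := sum_sqr_entries_linear_derive_le (D u) (Ale u).
have h0 : h r = 0.
  by rewrite /h Dr big1 // => i _; rewrite big1 // => j _; rewrite mxE expr0n.
apply/eqP; rewrite -normr_eq0 -sqrf_eq0 eq_le sqr_ge0 andbT.
exact: le_trans (sqr_mx_norm_le_sum (D t)) (gronwall_le0 dh h'le h0 t).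
Qed.

End linear_ode_uniqueness.

Section evolution_operator.
Context {R : realType} {n : nat} {A : R -> 'M[R]_n} {T : R -> R -> 'M[R]_n} {M : R}.
Hypothesis A_bounded : forall t, `|A t| <= M.
Hypothesis evT : evolution_operator A T.

Lemma evolution_cocycle t u s : T t u *m T u s = T t s.
Proof.
have [T1 dT] := evT; apply/eqP; rewrite -subr_eq0; apply/eqP.
apply: (linear_ode_eq0 (D := fun v => T v u *m T u s - T v s) (r := u) A_bounded _ _ t);
  last by rewrite T1 mul1mx subrr.
move=> v; apply: is_derive_eq (is_deriveB (is_derive_mulmxr (T u s) (dT v u)) (dT v s)) _.
by rewrite mulmxBr mulmxA.
Qed.

Lemma cvg_evolution_initial t s : (fun h => T t (h + s)) @ 0^' --> T t s.
Proof.
have [T1 dT] := evT.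
have Y1 : (fun h => T s (h + s)) @ 0^' --> (1%:M : 'M[R]_n).
  apply: (cvg_mx_left_inv1 (fun h => T (h + s) s)).
    by move=> h; rewrite evolution_cocycle T1.
  by rewrite -(T1 s); exact: is_derive_cvg_shift (dT s s).
have -> : (fun h => T t (h + s)) = (fun h => T t s *m T s (h + s)).
  by apply/funext => h; rewrite evolution_cocycle.
by rewrite -{2}(mulmx1 (T t s)); apply: cvg_mulmx Y1; exact: cvg_cst.
Qed.

Lemma is_derive_evolution_mulmx {k} {Z G : R -> 'M[R]_(n, k)} {s : R} t :
  is_derive s (1:R) Z (A s *m Z s + G s) ->
  is_derive s (1:R) (fun u => T t u *m Z u) (T t s *m G s).
Proof.
have [T1 dT] := evT; move=> dZ; apply/is_derive_quotientP.
have -> : (fun h => h^-1 *: (T t (h + s) *m Z (h + s) - T t s *m Z s)) =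
    (fun h => T t (h + s) *m (h^-1 *: (Z (h + s) - Z s) -
                              (h^-1 *: (T (h + s) s - T s s)) *m Z s)).
  apply/funext => h; rewrite -scalemxAl -scalerBr -scalemxAr T1 mulmxBl mul1mx.
  rewrite opprB addrA subrK mulmxBr mulmxA evolution_cocycle.
  by rewrite -(evolution_cocycle t (h + s) s) -mulmxA.
have -> : T t s *m G s = T t s *m ((A s *m Z s + G s) - (A s *m T s s) *m Z s).
  by rewrite T1 mulmx1 addrC addKr.
apply: cvg_mulmx; first exact: cvg_evolution_initial.
apply: cvgB; first exact/is_derive_quotientP.
by apply: cvg_mulmx; [exact/is_derive_quotientP | exact: cvg_cst].
Qed.

End evolution_operator.

Section powR_facts.
Context {R : realType}.

Lemma powRNV (x p : R) : 0 < x -> x `^ (- p) = x^-1 `^ p.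
Proof. by move=> x0; rewrite /powR !gt_eqF ?invr_gt0 // lnV ?posrE // mulrN mulNr. Qed.

Lemma is_derive_powR_div (f : R -> R) (a p t f' : R) :
  0 < a -> 0 < f t -> is_derive t (1:R) f f' ->
  is_derive t (1:R) (fun u => (f u / a) `^ p) (p * (f t / a) `^ p * (f' / f t)).
Proof.
move=> a0 ft0 df.
have fa0 : 0 < f t / a by rewrite divr_gt0.
have dfa : is_derive t (1:R) (fun u => f u / a) (f' / a).
  rewrite (_ : (fun u => f u / a) = a^-1 \*: f); last by apply/funext => u /=; rewrite mulrC.
  by rewrite mulrC; exact: is_deriveZ.
suff -> : p * (f t / a) `^ p * (f' / f t) = p * (f t / a) `^ (p - 1) * (f' / a).
  exact: (is_derive1_comp (f := fun x => x `^ p) (g := fun u => f u / a)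
    (is_derive1_powR p fa0) dfa).
rewrite powRB ?(gt_eqF fa0) ?implybT // powRr1 ?ltW //.
by field; rewrite !gt_eqF // powR_gt0.
Qed.

Lemma cvg_powR0 {T} {F : set_system T} {FF : Filter F} (r : T -> R) (p : R) :
  0 < p -> (\forall x \near F, 0 < r x) -> r @ F --> 0 -> r x `^ p @[x --> F] --> 0.
Proof.
move=> p0 rpos r0; apply: (cvg_comp r (fun x => x `^ p) (G := 0^'+)).
  by move=> P /r0 rP; apply: filterS2 rpos rP => x rx /(_ rx).
exact: powR_cvg0.
Qed.

Lemma ler_near_addr_powR0 {T} {F : set_system T} {FF : ProperFilter F}
  {r : T -> R} {X c : R} (k : R) {p : R} :
  0 < p -> (\forall x \near F, 0 < r x) -> r @ F --> 0 ->
  (\forall x \near F, X <= c + k * r x `^ p) -> X <= c.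
Proof.
move=> p0 rpos r0; apply: cvgr_to_ge.
rewrite -[c in _ --> c]addr0 -(mulr0 k).
by apply: cvgD; [exact: cvg_cst | apply: cvgM; [exact: cvg_cst | exact: cvg_powR0]].
Qed.

End powR_facts.

Section growth_rate.
Context {R : realType} {mu : R -> R}.
Hypothesis mu_growth : growth_rate mu.

Lemma growth_rate_gt0 t : 0 < mu t.
Proof. by case: mu_growth. Qed.

Lemma growth_rate_is_derive t : is_derive t (1:R) mu (derive1 mu t).
Proof. by have [_ [_ [mud _]]] := mu_growth; rewrite derive1E; exact: derivableP. Qed.

Lemma growth_rate_derive1_ge0 t : 0 <= derive1 mu t.
Proof.
have [_ [mu_incr [mud _]]] := mu_growth.
apply: (@incr_derive1_ge0 R mu setT) => [x _|x y _ _|]; first exact: mud.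
  exact: mu_incr.
by rewrite interiorT.
Qed.

Lemma growth_ratio_cvgNy t : mu s / mu t @[s --> -oo] --> 0.
Proof.
have [_ [_ [_ [_ [mu0 _]]]]] := mu_growth.
by rewrite -(mul0r (mu t)^-1); apply: cvgM => //; exact: cvg_cst.
Qed.

Lemma growth_ratio_cvgy t : mu t / mu s @[s --> +oo] --> 0.
Proof.
have [_ [_ [_ [_ [_ muy]]]]] := mu_growth.
rewrite -(mulr0 (mu t)); apply: cvgM; first exact: cvg_cst.
by apply/gtr0_cvgV0 => //; apply: nearW => s; exact: growth_rate_gt0.
Qed.

End growth_rate.

Section dichotomy_estimates.
Context {R : realType} {n : nat} {A : R -> 'M[R]_n} {T : R -> R -> 'M[R]_n}
  {mu : R -> R} {P : R -> 'M[R]_n} {K alpha gamma M B : R} {Z G : R -> 'cV[R]_n}.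
Hypothesis A_bounded : forall t, `|A t| <= M.
Hypothesis evT : evolution_operator A T.
Hypothesis mu_growth : growth_rate mu.
Hypothesis dichotomy : algebraic_dichotomy T mu P K alpha.
Hypothesis gamma_ge0 : 0 <= gamma.
Hypothesis Z_solution : forall s, is_derive s (1:R) Z (A s *m Z s + G s).
Hypothesis G_le : forall s, `|G s| <= gamma * (derive1 mu s / mu s) * `|Z s|.
Hypothesis Z_le : forall s, `|Z s| <= B.

Let c := K * gamma * B / alpha.

Let mu_gt0 t : 0 < mu t := growth_rate_gt0 mu_growth t.

Let c_ge0 : 0 <= c.
Proof.
have [K0 [alpha0 _]] := dichotomy; have B0 := le_trans (normr_ge0 _) (Z_le 0).
exact: divr_ge0 (mulr_ge0 (mulr_ge0 (ltW K0) gamma_ge0) B0) (ltW alpha0).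
Qed.

Lemma dichotomy_forcing_le (p : R) u : 0 <= p ->
  K * p * `|G u| <= c * (alpha * p * (derive1 mu u / mu u)).
Proof.
have [K0 [alpha0 _]] := dichotomy; move=> p0.
set rate := derive1 mu u / mu u.
have -> : c * (alpha * p * rate) = K * p * (gamma * rate * B).
  by rewrite /c; field; rewrite gt_eqF.
have rate0 : 0 <= rate by rewrite divr_ge0 ?growth_rate_derive1_ge0 // ltW.
apply: ler_wpM2l; first by rewrite mulr_ge0 // ltW.
exact: le_trans (G_le u) (ler_wpM2l (mulr_ge0 gamma_ge0 rate0) (Z_le u)).
Qed.

Lemma stable_part_le_at t s :
  s <= t -> `|P t *m Z t| <= c + K * B * (mu s / mu t) `^ alpha.
Proof.
have [K0 [alpha0 [_ [PT Ple _]]]] := dichotomy; have [T1 _] := evT.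
move=> st.
pose F u := P t *m (T t u *m Z u).
(* [phi] is a primitive of the bound on the derivative of [F]. *)
pose phi u := c * (mu u / mu t) `^ alpha.
have dF u : is_derive u (1:R) F (P t *m (T t u *m G u)).
  exact/is_derive_mulmxl/(is_derive_evolution_mulmx A_bounded evT t (Z_solution u)).
have dphi u : is_derive u (1:R) phi (c * (alpha * (mu u / mu t) `^ alpha *
                                          (derive1 mu u / mu u))).
  exact/is_deriveZ/is_derive_powR_div/growth_rate_is_derive.
have F'le u : s <= u <= t -> `|P t *m (T t u *m G u)| <=
    c * (alpha * (mu u / mu t) `^ alpha * (derive1 mu u / mu u)).
  move=> /andP[_ ut]; rewrite mulmxA -PT.
  apply: le_trans (Ple _ _ _ ut) _.
  rewrite powRNV ?divr_gt0 // invf_div.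
  exact/dichotomy_forcing_le/powR_ge0.
have Ft : F t = P t *m Z t by rewrite /F T1 mul1mx.
have phit : phi t = c by rewrite /phi divff ?gt_eqF // powR1 mulr1.
have := mean_value_mx_norm_le dF dphi F'le st; rewrite phit.
have phis : 0 <= phi s by apply: mulr_ge0 c_ge0 (powR_ge0 _ _).
have Fs : `|F s| <= K * B * (mu s / mu t) `^ alpha.
  rewrite /F mulmxA -PT; apply: le_trans (Ple _ _ _ st) _.
  rewrite powRNV ?divr_gt0 // invf_div mulrAC.
  by apply: ler_wpM2r; [exact: powR_ge0 | rewrite ler_pM2l].
have := ler_normD (F t - F s) (F s); rewrite subrK -Ft; lra.
Qed.

Lemma unstable_part_le_at t s :
  t <= s -> `|(1%:M - P t) *m Z t| <= c + K * B * (mu t / mu s) `^ alpha.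
Proof.
have [K0 [alpha0 [_ [PT _ Qle]]]] := dichotomy; have [T1 _] := evT.
move=> ts.
have QT u : (1%:M - P t) *m T t u = T t u *m (1%:M - P u).
  by rewrite mulmxBl mulmxBr mul1mx mulmx1 PT.
pose F u := (1%:M - P t) *m (T t u *m Z u).
pose phi u := - c * (mu u / mu t) `^ (- alpha).
have dF u : is_derive u (1:R) F ((1%:M - P t) *m (T t u *m G u)).
  exact/is_derive_mulmxl/(is_derive_evolution_mulmx A_bounded evT t (Z_solution u)).
have dphi u : is_derive u (1:R) phi (- c * (- alpha * (mu u / mu t) `^ (- alpha) *
                                            (derive1 mu u / mu u))).
  exact/is_deriveZ/is_derive_powR_div/growth_rate_is_derive.
have F'le u : t <= u <= s -> `|(1%:M - P t) *m (T t u *m G u)| <=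
    - c * (- alpha * (mu u / mu t) `^ (- alpha) * (derive1 mu u / mu u)).
  move=> /andP[tu _]; rewrite mulmxA QT.
  apply: le_trans (Qle _ _ _ tu) _.
  rewrite !mulNr mulrN opprK.
  exact/dichotomy_forcing_le/powR_ge0.
have Ft : F t = (1%:M - P t) *m Z t by rewrite /F T1 mul1mx.
have phit : phi t = - c by rewrite /phi divff ?gt_eqF // powR1 mulr1.
have := mean_value_mx_norm_le dF dphi F'le ts; rewrite phit distrC.
have phis : phi s <= 0.
  by rewrite /phi mulNr oppr_le0; apply: mulr_ge0 c_ge0 (powR_ge0 _ _).
have Fs : `|F s| <= K * B * (mu t / mu s) `^ alpha.
  rewrite /F mulmxA QT; apply: le_trans (Qle _ _ _ ts) _.
  rewrite powRNV ?divr_gt0 // invf_div mulrAC.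
  by apply: ler_wpM2r; [exact: powR_ge0 | rewrite ler_pM2l].
have := ler_normD (F t - F s) (F s); rewrite subrK -Ft; lra.
Qed.

Lemma stable_part_le t : `|P t *m Z t| <= c.
Proof.
have [_ [alpha0 _]] := dichotomy.
apply: (ler_near_addr_powR0 (K * B) alpha0 _ (growth_ratio_cvgNy mu_growth t)).
  by apply: nearW => s; rewrite divr_gt0.
near=> s; apply: stable_part_le_at.
by near: s; apply: nbhs_ninfty_le; rewrite num_real.
Unshelve. all: by end_near.
Qed.

Lemma unstable_part_le t : `|(1%:M - P t) *m Z t| <= c.
Proof.
have [_ [alpha0 _]] := dichotomy.
apply: (ler_near_addr_powR0 (K * B) alpha0 _ (growth_ratio_cvgy mu_growth t)).
  by apply: nearW => s; rewrite divr_gt0.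
near=> s; apply: unstable_part_le_at.
by near: s; apply: nbhs_pinfty_ge; rewrite num_real.
Unshelve. all: by end_near.
Qed.

Lemma dichotomy_solution_le t : `|Z t| <= 2 * c.
Proof.
have -> : Z t = P t *m Z t + (1%:M - P t) *m Z t.
  by rewrite mulmxBl mul1mx addrC subrK.
rewrite mulr_natl mulr2n; apply: le_trans (ler_normD _ _) _.
exact: lerD (stable_part_le t) (unstable_part_le t).
Qed.

End dichotomy_estimates.

Lemma contraction_le0 {R : archiRealFieldType} {I : Type} {u : I -> R} {theta M : R} :
  0 <= theta < 1 -> (forall i, u i <= M) ->
  (forall B, (forall i, u i <= B) -> forall i, u i <= theta * B) ->
  forall i, u i <= 0.
Proof.
move=> /andP[theta0 theta1] uM contract i.
have iterate k : forall j, u j <= theta ^+ k * M.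
  elim: k => [|k IH] j; first by rewrite expr0 mul1r.
  by rewrite exprS -mulrA; exact: contract.
apply: (cvgr_to_ge (F := \oo) (f := fun k => theta ^+ k * M)); last exact: nearW.
rewrite -(mul0r M); apply: cvgM; last exact: cvg_cst.
by apply: cvg_expr; rewrite ger0_norm.
Qed.

Theorem lemma3p4 (R : realType) (n : nat)
  (A : R -> 'M[R]_n) (T : R -> R -> 'M[R]_n) (mu : R -> R)
  (P : R -> 'M[R]_n) (K alpha beta gamma : R)
  (f : R -> 'cV[R]_n -> 'cV[R]_n) (x : R -> 'cV[R]_n) :
  continuous A ->
  (exists M : R, forall t, `|A t| <= M) ->
  evolution_operator A T ->
  growth_rate mu ->
  algebraic_dichotomy T mu P K alpha ->
  continuous (fun p : R * 'cV[R]_n => f p.1 p.2) ->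
  0 <= beta -> 0 <= gamma ->
  (forall t z, `|f t z| <= beta * (derive1 mu t / mu t)) ->
  (forall t z1 z2, `|f t z1 - f t z2| <= gamma * (derive1 mu t / mu t) * `|z1 - z2|) ->
  6 * K * gamma / alpha < 1 ->
  is_solution (fun t z => A t *m z + f t z) x ->
  forall Z : R -> 'cV[R]_n,
    (is_solution (fun t z => A t *m z + (f t (x t + z) - f t (x t))) Z /\ bounded_on_R Z)
    <-> Z = (fun _ => 0).
Proof.
move=> _ [M A_bounded] evT mu_growth dichotomy _ _ gamma_ge0 _ f_lip small _ Z.
split=> [[Z_solution [B Z_le]]|->]; last first.
  split; last by exists 0 => t; rewrite normr0.
  move=> t; apply: is_derive_eq (is_derive_cst 0 t 1) _.
  by rewrite mulmx0 add0r addr0 subrr.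
pose G s := f s (x s + Z s) - f s (x s).
have G_le s : `|G s| <= gamma * (derive1 mu s / mu s) * `|Z s|.
  by have := f_lip s (x s + Z s) (x s); rewrite addrAC subrr add0r.
have [K0 [alpha0 _]] := dichotomy.
pose theta := 2 * K * gamma / alpha.
have theta_bounds : 0 <= theta < 1.
  apply/andP; split; first by rewrite divr_ge0 ?mulr_ge0 ?(ltW K0) ?(ltW alpha0).
  have -> : theta = 6 * K * gamma / alpha / 3 by rewrite /theta; field; rewrite gt_eqF.
  lra.
apply/funext => t; apply/normr0_eq0/eqP; rewrite eq_le normr_ge0 andbT.
apply: (contraction_le0 (u := fun s => `|Z s|) theta_bounds Z_le _ t) => B' ZB' s.
have := dichotomy_solution_le A_bounded evT mu_growth dichotomy gamma_ge0 Z_solution G_le ZB' s.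
by have -> : 2 * (K * gamma * B' / alpha) = theta * B' by rewrite /theta; field; rewrite gt_eqF.
Qed.
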